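(* Let $I$ be a proper ideal in $\mathbb{B}_n$ generated by $g_1,\dots,g_r\in\mathbb{B}_n$ with canonical representatives $G_1,\dots,G_r\in P=\mathbb{F}_2[X_1,\dots,X_n]$. Let $Z=(z_1,\dots,z_s)$ be a tuple of distinct Boolean indeterminates and $Z'=(Z_1,\dots,Z_s)$ the tuple of their canonical representatives. (a) The procedure $\mathrm{CHECK}$ (over $K=\mathbb{F}_2$) applied to $(G_1,\dots,G_r)$ and $Z'$ returns a weight tuple $W\in\mathbb{N}^n$ if and only if there exist $f_1,\dots,f_s\in\langle g_1,\dots,g_r\rangle_{\mathbb{F}_2}$ such that $(f_1,\dots,f_s)$ is a $Z$-separating tuple of Boolean polynomials in $I$. (b) In the situation of (a), for every term ordering $\sigma$ compatible with the grading given by $W$ there exist $f'_1,\dots,f'_s\in\langle g_1,\dots,g_r\rangle_{\mathbb{F}_2}$ with $\operatorname{LT}_\sigma(f'_i)=z_i$ for $i=1,\dots,s$.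
   Context: $\mathbb{I}_n=\langle X_1^2-X_1,\dots,X_n^2-X_n\rangle$, $\mathbb{B}_n=P/\mathbb{I}_n$, Boolean indeterminates $x_i=X_i+\mathbb{I}_n$. Every $f\in\mathbb{B}_n$ has a unique representative $F\in P$ that is a sum of square-free terms (canonical representative); for a term ordering $\sigma$ on $P$, $\operatorname{LT}_\sigma(f)=\operatorname{LT}_\sigma(F)+\mathbb{I}_n$. A tuple $(f_1,\dots,f_s)$ of Boolean polynomials in $I$ is $Z$-separating if there is a term ordering $\sigma$ with $\operatorname{LT}_\sigma(f_i)=z_i$ for all $i$. For $W\in\mathbb{N}^n$ the $W$-degree of $X_1^{a_1}\cdots X_n^{a_n}$ is $\sum w_ia_i$; a term ordering $\sigma$ is compatible with the grading given by $W$ if $t>_\sigma t'$ whenever the $W$-degree of $t$ exceeds that of $t'$. Below, $K$ is a field, $P=K[x_1,\dots,x_n]$ generically; here $K=\mathbb{F}_2$ and the indeterminates are $X_1,\dots,X_n$. $\operatorname{Supp}(f)$ is the set of terms of $f$; $\operatorname{Lin}(f)$ the homogeneous degree-1 component; $\langle\cdot\rangle_K$ the $K$-linear span. Procedure $\mathrm{LI}$ (linear interreduction), applied to a tuple $Z=(z_1,\dots,z_s)$ of distinct indeterminates and polynomials $g_1,\dots,g_r$: let $t_1>\dots>t_m$ (lexicographic order, $x_1>\dots>x_n$) be the terms of $\bigcup_j\operatorname{Supp}(g_j)$ other than $z_1,\dots,z_s$; form the coefficient matrix $M$ of $g_1,\dots,g_r$ w.r.t. column order $(z_1,\dots,z_s,t_1,\dots,t_m)$;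 output the polynomials whose coefficient vectors are the nonzero rows of the reduced row echelon form of $M$, in order. Procedure $\mathrm{CHECK}$ on input $(g_1,\dots,g_r)$ and $Z$: (1) set $w_1=\dots=w_n=0$, $\delta=\max_j\deg(g_j)$, $d=1$. (2) In each $g_j$ delete every monomial not divisible by some indeterminate of $Z$. (3) If $\dim_K\langle\operatorname{Lin}(g_1),\dots,\operatorname{Lin}(g_r)\rangle_K<\#Z$, return ``Fail''. (4) Repeat: (i) replace the current list $g_1,\dots,g_r$ by the output of $\mathrm{LI}$ applied to the current $Z$ and the current list; (ii) let $\widetilde Z$ be the set of indeterminates of the current $Z$ that occur as elements of the current list; (iii) if $\widetilde Z=\emptyset$, return ``Fail''; (iv) for each $z\in\widetilde Z$, say $z=x_k$, set $w_k=d$ and remove $z$ from $Z$; (v) in each current $g_j$ delete every monomial not divisible by some indeterminate of the (updated) $Z$; (vi) replace $d$ by $\delta d+1$; until $Z$ is empty. (5) Return $W=(w_1,\dots,w_n)$. *)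

From HB Require Import structures.
From mathcomp Require Import all_boot all_order all_algebra.
Set Implicit Arguments. Unset Strict Implicit. Unset Printing Implicit Defensive.
Import Order.TTheory GRing.Theory.
Local Open Scope ring_scope.

(* Boolean polynomials.  An element f of B_n = F_2[X_1..X_n]/I_n is encoded  *)
(* by the coefficient vector of its canonical representative F in P, i.e.   *)
(* by the function sending each square-free term X^S (S a subset of the     *)
(* indeterminates, indices 0..n-1 standing for X_1..X_n) to its coefficient. *)
(* So the same object also IS the canonical representative F.                *)
Definition term n := {set 'I_n}.
Definition bpoly n := {ffun term n -> 'F_2}.

Section Boolean.
Variable n : nat.
Implicit Types (f g : bpoly n) (t u : term n).

Definition support f : {set term n} := [set t | f t != 0].

Definition bone : bpoly n := [ffun t => (t == set0)%:R].
Definition bvar (k : 'I_n) : bpoly n := [ffun t => (t == [set k])%:R].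

Definition bscale (a : 'F_2) f : bpoly n := [ffun t => a * f t].

(* multiplication in B_n : X^S * X^T = X^(S u T) since x_i^2 = x_i *)
Definition bmul f g : bpoly n :=
  \sum_(s : term n) \sum_(t : term n) [ffun u => (u == s :|: t)%:R * f s * g t].

Definition in_ideal r (g : 'I_r -> bpoly n) f : Prop :=
  exists h : 'I_r -> bpoly n, f = \sum_(j < r) bmul (h j) (g j).

Definition in_span r (g : 'I_r -> bpoly n) f : Prop :=
  exists c : 'I_r -> 'F_2, f = \sum_(j < r) bscale (c j) (g j).

Definition mon := {ffun 'I_n -> nat}.
Definition mon1 : mon := [ffun => 0%N].
Definition monM (a b : mon) : mon := [ffun i => (a i + b i)%N].
Definition mon_of t : mon := [ffun i => nat_of_bool (i \in t)].

Definition term_ordering (lt : rel mon) : Prop :=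
  [/\ irreflexive lt, transitive lt,
      (forall a b, a != b -> lt a b || lt b a),
      (forall a b c, lt a b -> lt (monM a c) (monM b c)) &
      (forall a, a != mon1 -> lt mon1 a)].

(* LT_sigma(f) = t  (t a square-free term; LT_sigma(f) = LT_sigma(F) + I_n) *)
Definition is_LT (lt : rel mon) f t : Prop :=
  f t != 0 /\ forall u, f u != 0 -> u != t -> lt (mon_of u) (mon_of t).

Definition wdeg (W : {ffun 'I_n -> nat}) (a : mon) : nat := (\sum_(i < n) W i * a i)%N.
Definition compatible_with (W : {ffun 'I_n -> nat}) (lt : rel mon) : Prop :=
  forall a b, (wdeg W b < wdeg W a)%N -> lt b a.

Definition Z_separating r (g : 'I_r -> bpoly n) s (Z : 'I_s -> 'I_n)
    (f : 'I_s -> bpoly n) : Prop :=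
  (forall i, in_ideal g (f i)) /\
  exists lt, term_ordering lt /\ forall i, is_LT lt (f i) [set Z i].

Definition lex_gt t u : bool :=
  [exists i : 'I_n, [&& i \in t, i \notin u &
     [forall j : 'I_n, (j < i)%N ==> ((j \in t) == (j \in u))]]].

Definition pivot (cols : seq (term n)) f : option (term n) :=
  ohead [seq c <- cols | f c != 0].

(* nonzero rows of the reduced row echelon form of the coefficient matrix of
   [rows] with respect to the column order [cols] (Gauss-Jordan elimination;
   all terms of the rows are assumed to occur in [cols]) *)
Fixpoint rref (cols : seq (term n)) (rows : seq (bpoly n)) : seq (bpoly n) :=
  if cols is c :: cs then
    let i := find (fun q : bpoly n => q c != 0) rows in
    if (i < size rows)%N then
      let r0 := nth 0 rows i in
      let r := bscale (r0 c)^-1 r0 in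
      let others := [seq q - bscale (q c) r | q : bpoly n <- take i rows ++ drop i.+1 rows] in
      let rest := rref cs others in
      foldl (fun (acc q : bpoly n) => if pivot cs q is Some p then acc - bscale (acc p) q else acc)
            r rest :: rest
    else rref cs rows
  else [::].

Definition LI (Z : seq 'I_n) (gs : seq (bpoly n)) : seq (bpoly n) :=
  let zt := [seq [set k] | k <- Z] in
  let others := [seq t <- enum (\bigcup_(g <- gs) support g) | t \notin zt] in
  let cols := zt ++ sort (fun t u => ~~ lex_gt u t) others in
  rref cols gs.

Definition restrictZ (Z : seq 'I_n) f : bpoly n :=
  [ffun t : term n => if has (fun k => k \in t) Z then f t else 0].

Definition linmx (gs : seq (bpoly n)) : 'M['F_2]_(size gs, n) :=
  \matrix_(j < size gs, i < n) (nth 0 gs j) [set i].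

Definition poly_deg f : nat := \max_(t in support f) #|t|.

(* step (4); [fuel] bounds the number of iterations (size Z suffices, since
   each non-failing iteration removes at least one element from Z) *)
Fixpoint check_loop (fuel : nat) (Z : seq 'I_n) (gs : seq (bpoly n))
    (w : {ffun 'I_n -> nat}) (delta d : nat) : option {ffun 'I_n -> nat} :=
  if fuel is fuel'.+1 then
    let gs1 := LI Z gs in
    let Zt := [seq k <- Z | bvar k \in gs1] in
    if Zt == [::] then None else
    let w' := [ffun i => if i \in Zt then d else w i] in
    let Z' := [seq k <- Z | k \notin Zt] in
    let gs2 := [seq restrictZ Z' g | g <- gs1] in
    let d' := (delta * d + 1)%N in
    if Z' == [::] then Some w' else check_loop fuel' Z' gs2 w' delta d'
  else None.

Definition CHECK (gs : seq (bpoly n)) (Z : seq 'I_n) : option {ffun 'I_n -> nat} :=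
  let delta := (\max_(g <- gs) poly_deg g)%N in
  let gs2 := [seq restrictZ Z g | g <- gs] in
  if (\rank (linmx gs2) < size Z)%N then None
  else check_loop (size Z) Z gs2 [ffun => 0%N] delta 1%N.

End Boolean.

From HB Require Import structures.
From mathcomp Require Import all_boot all_order all_algebra zify.
Set Implicit Arguments. Unset Strict Implicit. Unset Printing Implicit Defensive.
Import GRing.Theory.
Local Open Scope ring_scope.

(* The loop of CHECK keeps as its rows a spanning set of the restrictions of
   <g_1,...,g_r> to the indeterminates of Z not yet separated; a round
   separates x_k exactly when x_k lies in that span, since a reduced echelon
   basis contains every unit vector of its span.

   Soundness: if x_k is separated in the round assigning weight d, it is the
   restriction of some f in <g_1,...,g_r>.  Every other term of f avoids the
   remaining indeterminates, so it has degree at most delta in indeterminates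
   weighted earlier, each of weight below d / delta.  Hence x_k is the unique
   W-heaviest term of f, and the leading term of f for every term ordering
   compatible with W, such as the W-graded lexicographic one.

   Completeness: given f_1,...,f_s in the span with LT_sigma(f_i) = z_i, the
   linear parts are triangular, which gives the rank condition of step (3).
   In each round the sigma-smallest remaining z_k is separated: any other term
   of f_k divisible by a remaining indeterminate lies sigma-above z_k, so the
   restriction of f_k is exactly x_k. *)

Lemma F2_neq0_eq1 (a : 'F_2) : a != 0 -> a = 1.
Proof. by case: a => [[|[|]]] //= ? _; apply/val_inj. Qed.

Section LinearAlgebra.
Variable n : nat.
Local Notation V := (bpoly n).
Implicit Types (f q x y : V) (G : seq V) (cs : seq (term n)).

Lemma bscaleE (a : 'F_2) f : bscale a f = if a == 0 then 0 else f.
Proof.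
apply/ffunP=> t; have [->|/F2_neq0_eq1 ->] := eqVneq a 0.
  by rewrite !ffunE mul0r.
by rewrite ffunE mul1r.
Qed.

Lemma bscaleD (a b : 'F_2) f : bscale (a + b) f = bscale a f + bscale b f.
Proof. by apply/ffunP=> t; rewrite !ffunE mulrDl. Qed.

Lemma opp_bpoly f : - f = f.
Proof. by apply/ffunP=> t; rewrite ffunE (oppr_pchar2 (pchar_Fp (isT : prime 2))). Qed.

Lemma sub_bpoly f g : f - g = f + g.
Proof. by rewrite opp_bpoly. Qed.

Inductive spans G : V -> Prop :=
| spans0 : spans G 0
| spans_mem x : x \in G -> spans G x
| spansD x y : spans G x -> spans G y -> spans G (x + y).

Lemma spansB G x y : spans G x -> spans G y -> spans G (x - y).
Proof. by rewrite sub_bpoly; apply: spansD. Qed.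

Lemma spansZ G a x : spans G x -> spans G (bscale a x).
Proof. by rewrite bscaleE; case: ifP => // _; constructor. Qed.

Lemma spans_trans G H x : spans G x -> (forall y, y \in G -> spans H y) -> spans H x.
Proof. by move=> sx sGH; elim: sx => [|y /sGH|y z _ ? _ ?]; [constructor| |constructor]. Qed.

Lemma spans_subset G H x : spans G x -> {subset G <= H} -> spans H x.
Proof. by move=> sx sGH; apply: (spans_trans sx) => y /sGH; apply: spans_mem. Qed.

Lemma spans_coef_eq0 G x t : spans G x -> (forall q, q \in G -> q t = 0) -> x t = 0.
Proof. by move=> sx G0; elim: sx => [|y /G0|y z _ yt _ zt] //; rewrite ffunE ?yt ?zt ?addr0. Qed.

Lemma spans_coord G x : spans G x ->
  exists c : 'I_(size G) -> 'F_2, x = \sum_i bscale (c i) (nth 0 G i).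
Proof.
elim=> [|y yG|y z _ [c ->] _ [d ->]].
- by exists (fun _ => 0); rewrite big1 // => i _; rewrite bscaleE eqxx.
- have iy : (index y G < size G)%N by rewrite index_mem.
  exists (fun i => (i == Ordinal iy)%:R); rewrite (bigD1 (Ordinal iy)) //= eqxx big1.
    by rewrite addr0 bscaleE oner_eq0 nth_index.
  by move=> i /negbTE ->; rewrite bscaleE eqxx.
- by exists (fun i => c i + d i); rewrite -big_split; apply: eq_bigr => i _; rewrite bscaleD.
Qed.

Definition pivot_reduced cs (rows : seq V) :=
  forall i, (i < size rows)%N -> exists p, [/\ pivot cs (nth 0 rows i) = Some p,
    nth 0 rows i p = 1 & forall j, (j < size rows)%N -> j != i -> nth 0 rows j p = 0].

Lemma pivot_reduced_behead cs q rows : pivot_reduced cs (q :: rows) -> pivot_reduced cs rows.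
Proof.
move=> red i ilt; have [p [? ? rest0]] := red i.+1 ilt.
by exists p; split=> // j; apply: (rest0 j.+1).
Qed.

Lemma pivot_cons0 c cs q : q c = 0 -> pivot (c :: cs) q = pivot cs q.
Proof. by move=> qc; rewrite /pivot /= qc eqxx. Qed.

Lemma pivot_consN c cs q : q c != 0 -> pivot (c :: cs) q = Some c.
Proof. by move=> qc; rewrite /pivot /= qc. Qed.

(* A unit vector spanned by a reduced family is one of its rows: reading a
   combination at the pivots recovers its coefficients. *)
Lemma pivot_reduced_unit_mem cs rows f u : pivot_reduced cs rows -> spans rows f ->
  (forall t, f t = (t == u)%:R) -> f \in rows.
Proof.
move=> red /spans_coord [c fE] fu.
have fev v : f v = \sum_i c i * nth 0 rows i v.
  by rewrite fE sum_ffunE; apply: eq_bigr => i _; rewrite ffunE.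
have pivot_u (i : 'I_(size rows)) : c i != 0 -> exists p, [/\ p = u,
     nth 0 rows i p = 1 & forall j, (j < size rows)%N -> j != i -> nth 0 rows j p = 0].
  move=> ci; have [p [_ ip1 jp0]] := red i (ltn_ord i); exists p; split=> //.
  have fp : f p = c i.
    rewrite fev (bigD1 i) //= ip1 mulr1 big1 ?addr0 // => j ji.
    by rewrite jp0 ?mulr0.
  apply/eqP; apply: contraTT ci => /negbTE pu.
  by rewrite -fp fu pu.
have [i ci|c0] := pickP (fun i => c i != 0); last first.
  have := fu u; rewrite eqxx fev big1 => [/eqP|i _]; first by rewrite eq_sym oner_eq0.
  by rewrite (eqP (negbFE (c0 i))) mul0r.
have [p [pu ip1 _]] := pivot_u i ci.
have cj0 (j : 'I_(size rows)) : j != i -> c j = 0.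
  move=> ji; apply/eqP; apply: contraT => cj.
  have [p' [p'u _ jp'0]] := pivot_u j cj.
  have := jp'0 i (ltn_ord i); rewrite eq_sym ji => /(_ isT).
  by rewrite p'u -pu ip1 => /eqP; rewrite oner_eq0.
suff -> : f = nth 0 rows i by apply: mem_nth.
rewrite fE (bigD1 i) //= big1 => [|j ji]; last by rewrite cj0 // bscaleE eqxx.
by rewrite addr0 (F2_neq0_eq1 ci) bscaleE oner_eq0.
Qed.

Definition clear_pivot cs (acc q : V) : V :=
  if pivot cs q is Some p then acc - bscale (acc p) q else acc.

Lemma clear_pivots_spec cs rows acc : pivot_reduced cs rows ->
  let res := foldl (clear_pivot cs) acc rows in
  [/\ spans rows (res - acc),
    (forall j p, (j < size rows)%N -> pivot cs (nth 0 rows j) = Some p -> res p = 0) &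
    (forall u, (forall q, q \in rows -> q u = 0) -> res u = acc u)].
Proof.
elim: rows acc => [|q rows IH] acc red /=.
  by split => //; rewrite subrr; constructor.
have [p [qp q1 rows0]] := red 0%N isT; rewrite /= in qp q1.
have rows_p0 q' : q' \in rows -> q' p = 0.
  by move=> /(nthP 0) [j jlt <-]; apply: (rows0 j.+1).
have -> : clear_pivot cs acc q = acc - bscale (acc p) q by rewrite /clear_pivot qp.
have [IH1 IH2 IH3] := IH (acc - bscale (acc p) q) (pivot_reduced_behead red).
move: IH1 IH2 IH3; set res := foldl _ _ _ => IH1 IH2 IH3.
split.
- have -> : res - acc = (res - (acc - bscale (acc p) q)) - bscale (acc p) q.
    by rewrite opprB addrA addrAC addrK.
  apply: spansB; first by apply: (spans_subset IH1) => y yq; rewrite inE yq orbT.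
  by apply/spansZ/spans_mem; rewrite inE eqxx.
- move=> [|j] p' /= jlt jp'; last exact: IH2 jp'.
  move: jp'; rewrite qp => -[<-].
  by rewrite (IH3 p rows_p0) !ffunE q1 mulr1 subrr.
- move=> u qsu; rewrite IH3 => [|q' q'i]; last by apply: qsu; rewrite inE q'i orbT.
  by rewrite !ffunE (qsu q) ?inE ?eqxx // mulr0 subr0.
Qed.

Lemma eliminate_spec (c : term n) (r : V) (rows : seq V) : r c = 1 ->
  let others := [seq q - bscale (q c) r | q <- rows] in
  [/\ forall q, q \in others -> q c = 0,
      forall q, q \in others -> spans (r :: rows) q &
      forall q, q \in rows -> spans (r :: others) q].
Proof.
move=> rc1 /=; split=> q.
- by move=> /mapP [q0 _ ->]; rewrite !ffunE rc1 mulr1 subrr.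
- move=> /mapP [q0 q0r ->]; apply: spansB; first by apply: spans_mem; rewrite inE q0r orbT.
  by apply/spansZ/spans_mem; rewrite inE eqxx.
- move=> qr; rewrite -(subrK (bscale (q c) r) q); apply: spansD.
    by apply: spans_mem; rewrite inE (map_f (fun q => q - bscale (q c) r)) ?orbT.
  by apply/spansZ/spans_mem; rewrite inE eqxx.
Qed.

Definition supported_in cs (rows : seq V) := forall q t, q \in rows -> t \notin cs -> q t = 0.

Definition echelon_of cs rows out :=
  [/\ forall q, q \in out -> spans rows q, forall q, q \in rows -> spans out q
    & pivot_reduced cs out].

Lemma echelon_of_cons0 c cs rows out : (forall q, q \in rows -> q c = 0) ->
  echelon_of cs rows out -> echelon_of (c :: cs) rows out.
Proof.
move=> rows_c0 [out_rows rows_out red]; split=> // k klt.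
have [p [? ? ?]] := red k klt; exists p; split=> //.
by rewrite pivot_cons0 // (spans_coef_eq0 (out_rows _ (mem_nth 0 klt)) rows_c0).
Qed.

Lemma echelon_of_cons_pivot c cs (rows others rest : seq V) (r0 : V) : r0 \in rows -> r0 c = 1 ->
  (forall q, q \in others -> q c = 0) -> (forall q, q \in others -> spans rows q) ->
  (forall q, q \in rows -> spans (r0 :: others) q) -> echelon_of cs others rest ->
  echelon_of (c :: cs) rows (foldl (clear_pivot cs) r0 rest :: rest).
Proof.
move=> r0r r0c others_c0 others_rows rows_others [rest_others others_rest red].
have rest_c0 q : q \in rest -> q c = 0 by move=> /rest_others /spans_coef_eq0; apply.
have rest_rows q : q \in rest -> spans rows q by move/rest_others/spans_trans; apply.
have [r'_r0 r'_p0 r'_r0_eq] := clear_pivots_spec r0 red.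
move: r'_r0 r'_p0 r'_r0_eq; set r' := foldl _ _ _ => r'_r0 r'_p0 r'_r0_eq.
have r'c : r' c = 1 by rewrite r'_r0_eq.
split.
- move=> q; rewrite inE => /orP [/eqP ->|/rest_rows //].
  rewrite -(subrK r0 r'); apply: spansD; first exact: spans_trans r'_r0 rest_rows.
  exact: spans_mem.
- move=> q /rows_others /spans_trans; apply=> y; rewrite inE => /orP [/eqP ->|].
    rewrite -(subKr r' r0); apply: spansB; first by apply: spans_mem; rewrite inE eqxx.
    by apply: (spans_subset r'_r0) => z zr; rewrite inE zr orbT.
  by move=> /others_rest /spans_subset; apply=> z zr; rewrite inE zr orbT.
- move=> [|k] klt.
    exists c; rewrite /= pivot_consN ?r'c ?oner_eq0 //; split=> // -[|j] //= jlt _.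
    by apply: rest_c0; rewrite mem_nth.
  have [p [kp kp1 jp0]] := red k klt.
  exists p; rewrite /= pivot_cons0 ?rest_c0 ?mem_nth //; split=> // -[|j] jlt jk /=.
    exact: r'_p0 kp.
  exact: jp0.
Qed.

Lemma rref_spec cs rows : supported_in cs rows -> echelon_of cs rows (rref cs rows).
Proof.
elim: cs rows => [|c cs IH] rows supp /=.
  split=> // q qr; have -> : q = 0 by apply/ffunP=> t; rewrite ffunE supp.
  exact: spans0.
case: ifP => ilt; last first.
  have rows_c0 q : q \in rows -> q c = 0.
    move=> qr; apply/eqP; apply: contraFT ilt => qc.
    by rewrite -has_find; apply/hasP; exists q.
  apply/echelon_of_cons0/IH => // q t qr tcs; have [->|tc] := eqVneq t c; first exact: rows_c0.
  by apply: supp; rewrite // inE negb_or tc.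
set i := find _ rows; set r0 := nth 0 rows i.
have r0r : r0 \in rows by apply: mem_nth.
have r0c : r0 c = 1 by apply: F2_neq0_eq1; move: ilt; rewrite -has_find => /(nth_find 0).
have -> : bscale (r0 c)^-1 r0 = r0 by rewrite r0c invr1 bscaleE oner_eq0.
have [others_c0 others_span rows_span] := eliminate_spec (take i rows ++ drop i.+1 rows) r0c.
have others_rows q : q \in [seq q - bscale (q c) r0 | q <- take i rows ++ drop i.+1 rows] ->
    spans rows q.
  move=> /others_span /spans_subset; apply=> y; rewrite inE mem_cat.
  by case/or3P=> [/eqP->|/mem_take|/mem_drop].
apply: (echelon_of_cons_pivot r0r r0c others_c0 others_rows).
- move=> q; rewrite {1}(_ : rows = take i rows ++ r0 :: drop i.+1 rows).
    rewrite mem_cat inE orbCA -mem_cat => /orP [/eqP ->|/rows_span //].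
    by apply: spans_mem; rewrite inE eqxx.
  by rewrite /r0 -drop_nth // cat_take_drop.
- apply: IH => q t qo tcs; have [->|tc] := eqVneq t c; first exact: others_c0.
  apply: (spans_coef_eq0 (others_rows q qo)) => q' q'r.
  by apply: supp; rewrite // inE negb_or tc.
Qed.

Lemma LI_echelon (Zs : seq 'I_n) rows : exists cs, echelon_of cs rows (LI Zs rows).
Proof.
rewrite /LI; set cols := _ ++ _; exists cols; apply: rref_spec => q t qr.
apply: contraNeq => qt; rewrite mem_cat; case: (boolP (t \in _)) => //= tZ.
rewrite mem_sort mem_filter tZ mem_enum bigcup_seq.
by apply/bigcupP; exists q => //; rewrite inE.
Qed.

End LinearAlgebra.

Section Restriction.
Variable n : nat.
Local Notation V := (bpoly n).
Implicit Types (f q : V) (G rows : seq V) (Zs : seq 'I_n).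

Lemma restrictZD Zs f g : restrictZ Zs (f + g) = restrictZ Zs f + restrictZ Zs g.
Proof. by apply/ffunP=> t; rewrite !ffunE; case: ifP; rewrite ?addr0. Qed.

Lemma restrictZ0 Zs : restrictZ Zs (0 : V) = 0.
Proof. by apply/ffunP=> t; rewrite !ffunE; case: ifP. Qed.

Lemma restrictZ_id Zs1 Zs2 f : {subset Zs1 <= Zs2} ->
  restrictZ Zs1 (restrictZ Zs2 f) = restrictZ Zs1 f.
Proof.
move=> sZ; apply/ffunP=> t; rewrite !ffunE; case: ifP => // /hasP [k kZ kt].
by rewrite (_ : has _ Zs2 = true) //; apply/hasP; exists k; rewrite ?sZ.
Qed.

Lemma spans_restrictZ Zs G f : spans G f -> spans (map (restrictZ Zs) G) (restrictZ Zs f).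
Proof.
elim=> [|y yG|y z _ ? _ ?]; first by rewrite restrictZ0; constructor.
  by apply/spans_mem/map_f.
by rewrite restrictZD; constructor.
Qed.

(* span(rows) = restrictZ Zs (span G): the invariant of the loop of CHECK. *)
Definition spans_restriction G Zs rows :=
  (forall q, q \in rows -> exists2 f, spans G f & q = restrictZ Zs f) /\
  (forall f, spans G f -> spans rows (restrictZ Zs f)).

Lemma spans_restriction_init G Zs : spans_restriction G Zs (map (restrictZ Zs) G).
Proof.
split; last exact: spans_restrictZ.
by move=> q /mapP [f fG ->]; exists f => //; apply: spans_mem.
Qed.

Lemma spans_restriction_spans G Zs rows q : spans_restriction G Zs rows -> spans rows q ->
  exists2 f, spans G f & q = restrictZ Zs f.
Proof.
move=> [rows_G _]; elim=> [|y /rows_G //|y1 y2 _ [f1 f1G ->] _ [f2 f2G ->]].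
  by exists 0; [constructor | rewrite restrictZ0].
by exists (f1 + f2); [constructor | rewrite restrictZD].
Qed.

Lemma spans_restriction_LI G Zs rows : spans_restriction G Zs rows ->
  spans_restriction G Zs (LI Zs rows).
Proof.
move=> inv; have [cs [LI_rows rows_LI _]] := LI_echelon Zs rows; split.
  by move=> q /LI_rows; apply: spans_restriction_spans.
by move=> f /inv.2 /spans_trans; apply.
Qed.

Lemma spans_restriction_restrictZ G Zs Zs' rows : spans_restriction G Zs rows ->
  {subset Zs' <= Zs} -> spans_restriction G Zs' (map (restrictZ Zs') rows).
Proof.
move=> [rows_G G_rows] sZ; split.
  by move=> q /mapP [q1 /rows_G [f fG ->] ->]; exists f => //; apply: restrictZ_id.
by move=> f /G_rows /(spans_restrictZ Zs'); rewrite restrictZ_id.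
Qed.

End Restriction.

Lemma sum_lt_of_card_le (T : finType) (A : {set T}) (w : T -> nat) delta d :
  (forall i, i \in A -> delta * w i < d)%N -> (#|A| <= delta)%N -> (0 < d)%N ->
  (\sum_(i in A) w i < d)%N.
Proof.
move=> wA Adelta d_gt0; have [delta0|delta_gt0] := posnP delta.
  by move: Adelta; rewrite delta0 leqn0 => /eqP/cards0_eq ->; rewrite big_set0.
suff : (delta * \sum_(i in A) w i <= delta * d.-1)%N by rewrite leq_pmul2l //; lia.
rewrite big_distrr /=; apply: (@leq_trans (\sum_(i in A) d.-1)).
  by apply: leq_sum => i iA; have := wA i iA; lia.
by rewrite sum_nat_const leq_mul2r Adelta orbT.
Qed.

Section Soundness.
Variable n : nat.
Local Notation V := (bpoly n).
Implicit Types (f q : V) (G rows : seq V) (Zs : seq 'I_n) (W w : {ffun 'I_n -> nat}).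

Lemma wdeg_mon_of W (t : term n) : wdeg W (mon_of t) = (\sum_(i in t) W i)%N.
Proof.
rewrite /wdeg [RHS]big_mkcond; apply: eq_bigr => i _; rewrite ffunE.
by case: (i \in t); rewrite ?muln1 ?muln0.
Qed.

Definition wleading W f (u : term n) :=
  f u != 0 /\ forall t, f t != 0 -> t != u -> (wdeg W (mon_of t) < wdeg W (mon_of u))%N.

Lemma wleading_is_LT W lt f u : compatible_with W lt -> wleading W f u -> is_LT lt f u.
Proof. by move=> compat [fu lead]; split=> // t ft tu; apply/compat/lead. Qed.

Lemma restrictZ_bvar_wleading W Zs f k delta d :
  restrictZ Zs f = bvar k -> k \in Zs -> W k = d -> (0 < d)%N ->
  (forall i, i \notin Zs -> delta * W i < d)%N ->
  (forall t, f t != 0 -> (#|t| <= delta)%N) -> wleading W f [set k].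
Proof.
move=> fk kZ Wk d_gt0 W_small f_deg; split.
  have := congr1 (fun h : V => h [set k]) fk; rewrite /= !ffunE eqxx.
  rewrite (_ : has _ Zs = true); last by apply/hasP; exists k; rewrite ?set11.
  by move=> ->; rewrite oner_eq0.
move=> t ft tk; rewrite !wdeg_mon_of big_set1 Wk.
apply: (sum_lt_of_card_le _ (f_deg t ft) d_gt0) => i it; apply: W_small.
apply/negP => iZ; have := congr1 (fun h : V => h t) fk; rewrite /= !ffunE (negbTE tk).
rewrite (_ : has _ Zs = true); last by apply/hasP; exists i.
by move=> ft0; move: ft; rewrite ft0 eqxx.
Qed.

(* Every step fixes the weights of the newly separated indeterminates to [d];
   since [d] exceeds [delta] times every weight fixed before, any term of
   degree at most [delta] avoiding the remaining indeterminates weighs less. *)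
Lemma check_loop_sound G delta :
  (forall f t, spans G f -> f t != 0 -> (#|t| <= delta)%N) ->
  forall fuel Zs rows w d W, spans_restriction G Zs rows -> (0 < d)%N ->
  (forall i, i \notin Zs -> (delta * w i < d)%N) ->
  check_loop fuel Zs rows w delta d = Some W ->
  (forall i, i \notin Zs -> W i = w i) /\
  (forall k, k \in Zs -> exists2 f, spans G f & wleading W f [set k]).
Proof.
move=> G_deg; elim=> [|fuel IH] Zs rows w d W inv d_gt0 w_small //=.
set rows1 := LI Zs rows; set Zt := [seq k <- Zs | _].
case: eqP => // _; set w' := finfun _; set Zs' := [seq k <- Zs | _] => loop.
have inv1 : spans_restriction G Zs rows1 := spans_restriction_LI inv.
have [W_w' W_lead] : (forall i, i \notin Zs' -> W i = w' i) /\
    (forall k, k \in Zs' -> exists2 f, spans G f & wleading W f [set k]).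
  move: loop; case: eqP => [-> [<-] //|_ loop].
  apply: IH loop.
  - by apply: spans_restriction_restrictZ inv1 _ => k; rewrite mem_filter => /andP[].
  - by rewrite addn1.
  - move=> i; rewrite /w' ffunE mem_filter; case: ifP => [_ _|iZt]; first lia.
    move=> /= /w_small.
    have [->|delta_gt0] := posnP delta; first by rewrite !mul0n.
    by have := leq_pmull d delta_gt0; lia.
have W_w i : i \notin Zs -> W i = w i.
  move=> iZs; rewrite W_w' ?mem_filter ?(negbTE iZs) ?andbF //.
  by rewrite /w' ffunE mem_filter (negbTE iZs) andbF.
split=> // k kZs; have [kZt|kZt] := boolP (k \in Zt); last first.
  by apply: W_lead; rewrite mem_filter kZt.
have [f fG fk] : exists2 f, spans G f & bvar k = restrictZ Zs f.
  by apply: inv1.1; move: kZt; rewrite mem_filter => /andP[].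
exists f => //; apply: (restrictZ_bvar_wleading (delta := delta) (esym fk) kZs _ d_gt0).
- by rewrite W_w'; [rewrite /w' ffunE kZt | rewrite mem_filter kZt].
- by move=> i iZs; rewrite W_w //; apply: w_small.
- by move=> t; apply: G_deg.
Qed.

End Soundness.

Lemma ex_minimal (T : eqType) (R : rel T) (s : seq T) : irreflexive R -> transitive R ->
  s != [::] -> exists2 x, x \in s & forall y, y \in s -> ~~ R y x.
Proof.
move=> irrR trR; elim: s => [//|a s IH] _.
have [->|s_ne] := eqVneq s [::].
  by exists a; rewrite ?inE ?eqxx // => y; rewrite inE => /eqP ->; rewrite irrR.
have [m ms m_min] := IH s_ne; have [Ram|NRam] := boolP (R a m).
  exists a; first by rewrite inE eqxx.
  move=> y; rewrite inE => /orP [/eqP ->|ys]; first by rewrite irrR.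
  by apply/negP => Rya; have := m_min y ys; rewrite (trR _ _ _ Rya Ram).
by exists m; [rewrite inE ms orbT | move=> y; rewrite inE => /orP [/eqP ->|/m_min]].
Qed.

Section Completeness.
Variable n : nat.
Local Notation V := (bpoly n).
Implicit Types (f q : V) (G rows : seq V) (Zs : seq 'I_n) (lt : rel (mon n)).

Lemma monM1m (a : mon n) : monM (mon1 n) a = a.
Proof. by apply/ffunP=> i; rewrite !ffunE. Qed.

Lemma mon_of_split (t : term n) k : k \in t ->
  mon_of t = monM (mon_of (t :\ k)) (mon_of [set k]).
Proof.
move=> kt; apply/ffunP=> i; rewrite !ffunE !inE.
by have [->|ik] := eqVneq i k; rewrite /= ?kt ?addn0 ?add0n.
Qed.

Lemma mon_of_ge_var lt (t : term n) k : term_ordering lt -> k \in t ->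
  mon_of t = mon_of [set k] \/ lt (mon_of [set k]) (mon_of t).
Proof.
move=> [_ _ _ ltM lt1] kt; rewrite (mon_of_split kt).
have [->|t_ne1] := eqVneq (mon_of (t :\ k)) (mon1 n); first by left; rewrite monM1m.
by right; have := ltM _ _ (mon_of [set k]) (lt1 _ t_ne1); rewrite monM1m.
Qed.

(* A term of [f] divisible by some x_k' with k' in [Zs] is >= x_k' >= x_k,
   so it can only be x_k itself. *)
Lemma restrictZ_LT_min lt f Zs k : term_ordering lt -> is_LT lt f [set k] -> k \in Zs ->
  (forall k', k' \in Zs -> ~~ lt (mon_of [set k']) (mon_of [set k])) ->
  restrictZ Zs f = bvar k.
Proof.
move=> lt_ord [fk f_lt] kZ k_min; have [irr tr _ _ _] := lt_ord.
apply/ffunP=> t; rewrite !ffunE; case: ifP => [/hasP [k' k'Z k't]|Zt].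
  have [->|tk] := eqVneq t [set k]; first by rewrite (F2_neq0_eq1 fk).
  apply/eqP; apply: contraT => ft; have := f_lt t ft tk.
  case: (mon_of_ge_var lt_ord k't) => [->|lt_k't lt_tk]; first by move/negP: (k_min k' k'Z).
  by have := k_min k' k'Z; rewrite (tr _ _ _ lt_k't lt_tk).
have [tk|] := eqVneq t [set k] => //.
by move: Zt; rewrite tk (_ : has _ Zs = true) //; apply/hasP; exists k; rewrite ?set11.
Qed.

Lemma bvar_mem_LI lt G Zs rows f k : term_ordering lt -> spans_restriction G Zs rows ->
  spans G f -> is_LT lt f [set k] -> k \in Zs ->
  (forall k', k' \in Zs -> ~~ lt (mon_of [set k']) (mon_of [set k])) ->
  bvar k \in LI Zs rows.
Proof.
move=> lt_ord inv fG f_lt kZ k_min; have [cs [_ _ red]] := LI_echelon Zs rows.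
apply: (pivot_reduced_unit_mem (u := [set k]) red); last by move=> t; rewrite ffunE.
by rewrite -(restrictZ_LT_min lt_ord f_lt kZ k_min); apply: (spans_restriction_LI inv).2.
Qed.

(* Each step separates at least the lt-smallest remaining indeterminate. *)
Lemma check_loop_complete lt G delta : term_ordering lt ->
  forall fuel Zs rows w d, spans_restriction G Zs rows -> Zs != [::] -> (size Zs <= fuel)%N ->
  (forall k, k \in Zs -> exists2 f, spans G f & is_LT lt f [set k]) ->
  exists W, check_loop fuel Zs rows w delta d = Some W.
Proof.
move=> lt_ord; have [irr tr _ _ _] := lt_ord.
elim=> [|fuel IH] Zs rows w d inv Zs_ne Zs_fuel sep /=.
  by move: Zs_fuel; rewrite leqn0 size_eq0 (negbTE Zs_ne).
set Zt := [seq k <- Zs | _].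
have [k kZ k_min] := @ex_minimal _ (fun a b => lt (mon_of [set a]) (mon_of [set b])) _
  (fun a => irr _) (fun a b c => tr _ _ _) Zs_ne.
have kZt : k \in Zt.
  have [f fG f_lt] := sep k kZ; rewrite mem_filter kZ andbT.
  exact: bvar_mem_LI lt_ord inv fG f_lt kZ k_min.
case: eqP => [Zt0|_]; first by rewrite Zt0 in kZt.
case: eqP => [_|/eqP Zs'_ne]; first by eexists.
have sZ : {subset [seq x <- Zs | x \notin Zt] <= Zs} by move=> x; rewrite mem_filter => /andP[].
apply: IH Zs'_ne _ _; first exact: spans_restriction_restrictZ (spans_restriction_LI inv) sZ.
  rewrite -ltnS (leq_trans _ Zs_fuel) // size_filter -(count_predC (fun x => x \notin Zt)).
  by rewrite -{1}(addn0 (count _ _)) ltn_add2l -has_count; apply/hasP; exists k; rewrite /= ?negbK.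
by move=> x /sZ; apply: sep.
Qed.

End Completeness.

Section WeightedLex.
Variable n : nat.
Implicit Types (a b c : mon n) (W : {ffun 'I_n -> nat}).

Definition lexlt a b := [exists i : 'I_n, (a i < b i)%N &&
  [forall j : 'I_n, (j < i)%N ==> (a j == b j)]].

Definition wlex W a b :=
  (wdeg W a < wdeg W b)%N || ((wdeg W a == wdeg W b) && lexlt a b).

Lemma lexlt_irr a : lexlt a a = false.
Proof. by apply/negbTE/existsPn => i; rewrite ltnn. Qed.

Lemma lexlt_trans : transitive lexlt.
Proof.
move=> b a c /existsP [i /andP [abi /forallP ab]] /existsP [k /andP [bck /forallP bc]].
have agree (j : 'I_n) : (j < i)%N -> (j < k)%N -> a j = c j.
  by move=> ji jk; rewrite (eqP (implyP (ab j) ji)) (eqP (implyP (bc j) jk)).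
apply/existsP; case: (ltngtP i k) => [ik|ki|/val_inj ik].
- exists i; rewrite -(eqP (implyP (bc i) ik)) abi /=; apply/forallP => j.
  by apply/implyP => ji; rewrite agree // (ltn_trans ji ik).
- exists k; rewrite (eqP (implyP (ab k) ki)) bck /=; apply/forallP => j.
  by apply/implyP => jk; rewrite agree // (ltn_trans jk ki).
- subst k; exists i; rewrite (ltn_trans abi bck) /=; apply/forallP => j.
  by apply/implyP => ji; rewrite agree.
Qed.

Lemma lexlt_total a b : a != b -> lexlt a b || lexlt b a.
Proof.
move=> ab; have [i0 abi0] : exists i, a i != b i.
  apply/existsP; apply: contraNT ab => /existsPn ab_eq.
  by apply/eqP/ffunP => i; apply/eqP; rewrite -[_ == _]negbK ab_eq.
case: (@arg_minnP _ i0 (fun i => a i != b i) (fun i : 'I_n => val i) abi0) => i abi i_min.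
have agree (j : 'I_n) : (j < i)%N -> a j == b j.
  by move=> ji; apply: contraTT ji => abj; rewrite -leqNgt; apply: i_min.
case: (ltngtP (a i) (b i)) => [lt_ab|lt_ba|eq_ab]; last by rewrite eq_ab eqxx in abi.
  apply/orP; left; apply/existsP; exists i; rewrite lt_ab.
  by apply/forallP => j; apply/implyP/agree.
apply/orP; right; apply/existsP; exists i; rewrite lt_ba; apply/forallP => j.
by apply/implyP => /agree; rewrite eq_sym.
Qed.

Lemma lexltMr a b c : lexlt a b -> lexlt (monM a c) (monM b c).
Proof.
move=> /existsP [i /andP [abi /forallP ab]]; apply/existsP; exists i.
rewrite !ffunE ltn_add2r abi /=; apply/forallP => j; apply/implyP => ji.
by rewrite !ffunE eqn_add2r (implyP (ab j) ji).
Qed.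

Lemma lexlt1m a : a != mon1 n -> lexlt (mon1 n) a.
Proof.
move=> a_ne1; have := lexlt_total a_ne1; rewrite orbC.
by case/orP => // /existsP [i /andP [+ _]]; rewrite ffunE.
Qed.

Lemma wdeg_monM W a b : wdeg W (monM a b) = (wdeg W a + wdeg W b)%N.
Proof. by rewrite /wdeg -big_split; apply: eq_bigr => i _; rewrite ffunE mulnDr. Qed.

Lemma wdeg_mon1 W : wdeg W (mon1 n) = 0%N.
Proof. by rewrite /wdeg big1 // => i _; rewrite ffunE muln0. Qed.

Lemma wlex_term_ordering W : term_ordering (wlex W).
Proof.
split.
- by move=> a; rewrite /wlex ltnn lexlt_irr andbF.
- move=> b a c; rewrite /wlex.
  case/orP=> [ab|/andP [/eqP ab lex_ab]] /orP [bc|/andP [/eqP bc lex_bc]]; apply/orP.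
  + by left; apply: ltn_trans ab bc.
  + by left; rewrite -bc.
  + by left; rewrite ab.
  + by right; rewrite ab bc eqxx (lexlt_trans lex_ab lex_bc).
- move=> a b ab; rewrite /wlex; case: (ltngtP (wdeg W a) (wdeg W b)) => //= _.
  exact: lexlt_total.
- move=> a b c; rewrite /wlex !wdeg_monM ltn_add2r eqn_add2r.
  by case/orP => [->//|/andP [-> /lexltMr ->]]; rewrite orbT.
- move=> a a_ne1; rewrite /wlex wdeg_mon1.
  by have [->|//] := posnP (wdeg W a); rewrite eqxx lexlt1m.
Qed.

Lemma wlex_compatible W : compatible_with W (wlex W).
Proof. by move=> a b ba; rewrite /wlex ba. Qed.

End WeightedLex.

Lemma row_free_triangular (K : fieldType) s m (R : rel 'I_m) (c : 'I_s -> 'I_m)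
    (F : 'M[K]_(s, m)) : irreflexive R -> transitive R ->
  (forall i, F i (c i) != 0) -> (forall i j, j != i -> F j (c i) != 0 -> R (c i) (c j)) ->
  row_free F.
Proof.
move=> irr tr Fc F_tri; rewrite -kermx_eq0; apply/rowV0P => v /sub_kermxP vF0.
apply/rowP => i0; rewrite mxE; apply/eqP; apply: contraT => vi0.
set P := [seq i <- enum 'I_s | v 0 i != 0].
have P_ne : P != [::].
  apply/eqP => P0; suff : i0 \in P by rewrite P0.
  by rewrite mem_filter vi0 mem_enum.
have [i iP i_max] := @ex_minimal _ (fun a b => R (c b) (c a)) P (fun a => irr _)
  (fun a b d Rba Rdb => tr _ _ _ Rdb Rba) P_ne.
have vi : v 0 i != 0 by move: iP; rewrite mem_filter => /andP [].
have := congr1 (fun M : 'rV_m => M 0 (c i)) vF0; rewrite /= !mxE (bigD1 i) //= big1.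
  by rewrite addr0 => /eqP; rewrite mulf_eq0 (negbTE vi) (negbTE (Fc i)).
move=> j ji; have [->|vj] := eqVneq (v 0 j) 0; first by rewrite mul0r.
apply/eqP; rewrite mulf_eq0 (negbTE vj) /=; apply: contraT => /(F_tri i j ji) Rij.
by have := i_max j; rewrite mem_filter vj mem_enum Rij => /(_ isT).
Qed.

Section Check.
Variable n : nat.
Local Notation V := (bpoly n).
Implicit Types (f : V) (G rows : seq V) (Zs : seq 'I_n).

Lemma in_spanP r (g : 'I_r -> V) f : in_span g f <-> spans [seq g j | j <- enum 'I_r] f.
Proof.
split=> [[c ->]|].
  apply: (big_ind (spans _)) => [|x y|j _]; [exact: spans0|exact: spansD|].
  by apply/spansZ/spans_mem/map_f; rewrite mem_enum.
elim=> [|x /mapP [j _ ->]|x y _ [c ->] _ [d ->]].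
- by exists (fun _ => 0); rewrite big1 // => j _; rewrite bscaleE eqxx.
- exists (fun i => (i == j)%:R); rewrite (bigD1 j) //= big1 ?addr0 => [|i /negbTE ->].
    by rewrite eqxx bscaleE oner_eq0.
  by rewrite bscaleE eqxx.
- by exists (fun j => c j + d j); rewrite -big_split; apply: eq_bigr => j _; rewrite bscaleD.
Qed.

Lemma bmul_bscale1 (a : 'F_2) f : bmul (bscale a (bone n)) f = bscale a f.
Proof.
apply/ffunP=> u; rewrite /bmul (@sum_ffunE (term n) 'F_2).
rewrite (eq_bigr (fun s : term n => if s == set0 then a * f u else 0)) => [|s _].
  by rewrite -big_mkcond big_pred1_eq ffunE.
rewrite (@sum_ffunE (term n) 'F_2); have [->|/negbTE s_ne0] := eqVneq s set0.
  rewrite (bigD1 u) //= big1 => [|t tu]; last first.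
    by rewrite !ffunE set0U eq_sym (negbTE tu) !mul0r.
  by rewrite !ffunE set0U !eqxx mulr1 mul1r addr0.
by rewrite big1 // => t _; rewrite !ffunE s_ne0 !mulr0 mul0r.
Qed.

Lemma in_span_ideal r (g : 'I_r -> V) f : in_span g f -> in_ideal g f.
Proof.
move=> [c ->]; exists (fun j => bscale (c j) (bone n)).
by apply: eq_bigr => j _; rewrite bmul_bscale1.
Qed.

Lemma spans_card_le G f t : spans G f -> f t != 0 -> (#|t| <= \max_(g <- G) poly_deg g)%N.
Proof.
elim=> [|x xG|x y _ IHx _ IHy]; first by rewrite ffunE eqxx.
  move=> xt; apply: leq_trans (leq_bigmax_seq _ xG isT).
  by apply: leq_bigmax_cond; rewrite inE.
rewrite ffunE; have [xt0|xt _] := eqVneq (x t) 0; last exact: IHx.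
by rewrite xt0 add0r; apply: IHy.
Qed.

Definition linrow f : 'rV['F_2]_n := \row_k f [set k].

Lemma linrow_submx rows f : spans rows f -> (linrow f <= linmx rows)%MS.
Proof.
elim=> [|x xr|x y _ sx _ sy].
- by rewrite (_ : linrow 0 = 0) ?sub0mx //; apply/rowP => k; rewrite !mxE ffunE.
- have xi : (index x rows < size rows)%N by rewrite index_mem.
  rewrite (_ : linrow x = row (Ordinal xi) (linmx rows)) ?row_sub //.
  by apply/rowP => k; rewrite !mxE /= nth_index.
- rewrite (_ : linrow (x + y) = linrow x + linrow y) ?addmx_sub //.
  by apply/rowP => k; rewrite !mxE ffunE.
Qed.

Lemma separating_rank_linmx G Zs s (Z : 'I_s -> 'I_n) lt (f : 'I_s -> V) :
  injective Z -> term_ordering lt -> (forall i, Z i \in Zs) ->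
  (forall i, spans G (f i)) -> (forall i, is_LT lt (f i) [set Z i]) ->
  (s <= \rank (linmx [seq restrictZ Zs g | g <- G]))%N.
Proof.
move=> Zinj [irr tr _ _ _] ZZs fG f_lt.
pose F := \matrix_(i < s, k < n) restrictZ Zs (f i) [set k].
have F_restr i k : F i (Z k) = f i [set Z k].
  rewrite !mxE ffunE (_ : has _ Zs = true) //.
  by apply/hasP; exists (Z k); rewrite ?set11.
have F_sub : (F <= linmx [seq restrictZ Zs g | g <- G])%MS.
  apply/row_subP => i; rewrite (_ : row i F = linrow (restrictZ Zs (f i))).
    exact/linrow_submx/spans_restrictZ.
  by apply/rowP => k; rewrite !mxE.
have F_free : row_free F.
  apply: (@row_free_triangular _ _ _ (fun k k' => lt (mon_of [set k]) (mon_of [set k'])) Z).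
  - by move=> k; apply: irr.
  - by move=> ? ? ?; apply: tr.
  - by move=> i; rewrite F_restr; case: (f_lt i).
  - move=> i j ji; rewrite F_restr /= => fji; have [_ +] := f_lt j; apply=> //.
    by apply: contraNneq ji => /set1_inj/Zinj ->.
by rewrite -(eqP F_free); apply: mxrankS.
Qed.

Lemma CHECK_sound G Zs W : CHECK G Zs = Some W ->
  forall k, k \in Zs -> exists2 f, spans G f & wleading W f [set k].
Proof.
rewrite /CHECK; case: ifP => // _ loop.
have w0_small i : i \notin Zs -> ((\max_(g <- G) poly_deg g) * [ffun=> 0%N] i < 1)%N.
  by rewrite ffunE muln0.
by have [] := check_loop_sound (@spans_card_le G) (spans_restriction_init G Zs)
  (ltn0Sn 0) w0_small loop.
Qed.

Lemma CHECK_complete G s (Z : 'I_s -> 'I_n) lt (f : 'I_s -> V) :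
  injective Z -> (0 < s)%N -> term_ordering lt ->
  (forall i, spans G (f i)) -> (forall i, is_LT lt (f i) [set Z i]) ->
  exists W, CHECK G [seq Z i | i <- enum 'I_s] = Some W.
Proof.
move=> Zinj s_gt0 lt_ord fG f_lt; set Zs := map Z _.
have ZZs i : Z i \in Zs by rewrite map_f ?mem_enum.
have Zs_size : size Zs = s by rewrite size_map size_enum_ord.
rewrite /CHECK ltnNge Zs_size (separating_rank_linmx Zinj lt_ord ZZs fG f_lt) /=.
apply: (check_loop_complete _ lt_ord).
- exact: spans_restriction_init.
- by rewrite -size_eq0 Zs_size -lt0n.
- by rewrite Zs_size.
- by move=> k /mapP [i _ ->]; exists (f i).
Qed.

Lemma CHECK_separates r (g : 'I_r -> V) s (Z : 'I_s -> 'I_n) W lt :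
  CHECK [seq g j | j <- enum 'I_r] [seq Z i | i <- enum 'I_s] = Some W ->
  compatible_with W lt ->
  exists f : 'I_s -> V, (forall i, in_span g (f i)) /\ (forall i, is_LT lt (f i) [set Z i]).
Proof.
move=> /CHECK_sound W_lead compat.
have ZZs i : Z i \in [seq Z i | i <- enum 'I_s] by rewrite map_f ?mem_enum.
have [f f_span f_lead] := fin_all_exists2 (fun i => W_lead (Z i) (ZZs i)).
by exists f; split=> i; [apply/in_spanP | apply: wleading_is_LT compat _].
Qed.

End Check.

Theorem proposition6p4 (n r s : nat) (g : 'I_r -> bpoly n) (Z : 'I_s -> 'I_n) :
  injective Z -> (0 < s)%N ->
  ~ in_ideal g (bone n) ->
  let G := [seq g j | j <- enum 'I_r] in
  let Z' := [seq Z i | i <- enum 'I_s] in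
  ((exists W, CHECK G Z' = Some W) <->
   (exists f : 'I_s -> bpoly n, (forall i, in_span g (f i)) /\ Z_separating g Z f))
  /\
  (forall W, CHECK G Z' = Some W ->
   forall lt : rel (mon n), term_ordering lt -> compatible_with W lt ->
   exists f' : 'I_s -> bpoly n,
     (forall i, in_span g (f' i)) /\ (forall i, is_LT lt (f' i) [set Z i])).
Proof.
move=> Zinj s_gt0 _ G Z'.
split=> [|W CHECK_W lt _]; last exact: CHECK_separates.
split=> [[W CHECK_W]|[f [f_span [_ [lt [lt_ord f_lt]]]]]].
  have [f' [f'_span f'_lt]] := CHECK_separates CHECK_W (@wlex_compatible _ W).
  exists f'; split=> //; split=> [i|]; first exact: in_span_ideal.
  by exists (wlex W); split=> //; apply: wlex_term_ordering.
by apply: (CHECK_complete Zinj s_gt0 lt_ord _ f_lt) => i; apply/in_spanP.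
Qed.
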